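(* For every computable endofunctor $d$, the space $\mathbb{S}$ is $d$-admissible, i.e. $\kappa^d:d\mathbb{S}\to\mathcal{C}(\mathcal{O}(\mathbb{S}),d\mathbb{S})$ is injective and has a computable inverse on its image.
   Context: Represented spaces are pairs $(X,\delta_X)$ with $\delta_X:\subseteq\{0,1\}^\mathbb{N}\to X$ a partial surjection; computable/continuous maps are those with computable/continuous realizers; $\mathcal{C}(\mathbf{X},\mathbf{Y})$ is the represented space of continuous maps. $\mathbb{S}=(\{\bot,\top\},\delta_\mathbb{S})$, $\delta_\mathbb{S}(0^\mathbb{N})=\bot$, $\delta_\mathbb{S}(p)=\top$ otherwise; $\mathcal{O}(\mathbf{Y})=\mathcal{C}(\mathbf{Y},\mathbb{S})$. A computable endofunctor is an endofunctor $d$ on the category of represented spaces and continuous maps such that each $f\mapsto df:\mathcal{C}(\mathbf{X},\mathbf{Y})\to\mathcal{C}(d\mathbf{X},d\mathbf{Y})$ is computable. $\kappa^d:d\mathbf{Y}\to\mathcal{C}(\mathcal{O}(\mathbf{Y}),d\mathbb{S})$ is $\kappa^d(y)(U)=(dU)(y)$; $\mathbf{Y}$ is $d$-admissible if $\kappa^d$ is computably invertible on its image. *)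

From Stdlib Require Import List Arith.
Import ListNotations.

Definition Cantor := nat -> bool.

Definition prefix (p : Cantor) (k : nat) : list bool := map p (seq 0 k).

Fixpoint enc (w : list bool) : nat :=
  match w with
  | [] => 1
  | b :: w' => 2 * enc w' + (if b then 1 else 0)
  end.

(** output-bit coding: false |-> 1, true |-> 2 (any other value = "no output yet") *)
Definition bcode (b : bool) : nat := if b then 2 else 1.

Definition npair (a b : nat) : nat := (a + b) * (a + b + 1) / 2 + b.

Inductive code : Type :=
| CZero : code
| CSucc : code
| CProj : nat -> code
| CComp : code -> list code -> code
| CPrim : code -> code -> code
| CMu   : code -> code.

Inductive eval : code -> list nat -> nat -> Prop :=
| ev_zero : forall xs, eval CZero xs 0
| ev_succ : forall xs, eval CSucc xs (S (nth 0 xs 0))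
| ev_proj : forall i xs, eval (CProj i) xs (nth i xs 0)
| ev_comp : forall f gs xs ys v,
    Forall2 (fun g y => eval g xs y) gs ys -> eval f ys v -> eval (CComp f gs) xs v
| ev_prim0 : forall f g xs v, eval f xs v -> eval (CPrim f g) (0 :: xs) v
| ev_primS : forall f g n xs r v,
    eval (CPrim f g) (n :: xs) r -> eval g (n :: r :: xs) v ->
    eval (CPrim f g) (S n :: xs) v
| ev_mu : forall f xs v,
    eval f (v :: xs) 0 ->
    (forall k, k < v -> exists m, eval f (k :: xs) (S m)) ->
    eval (CMu f) xs v.

(** * Realizers via (partial) word functions
    [M w n c] : on input prefix w, the machine answers c about output bit n
    (c = bcode b means "bit n is b"). *)
Definition computes (M : list bool -> nat -> nat -> Prop) (p q : Cantor) : Prop :=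
  forall n,
    (exists k, M (prefix p k) n (bcode (q n))) /\
    (forall k b, M (prefix p k) n (bcode b) -> b = q n).

Definition realizes {A B : Type} (rA : Cantor -> A -> Prop) (rB : Cantor -> B -> Prop)
  (M : list bool -> nat -> nat -> Prop) (f : A -> B) : Prop :=
  forall p x, rA p x -> exists q, computes M p q /\ rB q (f x).

Definition machine (e : code) : list bool -> nat -> nat -> Prop :=
  fun w n c => eval e [enc w; n] c.

(** continuous realizer: arbitrary (total) word function *)
Definition cont_machine (M : list bool -> nat -> nat) : list bool -> nat -> nat -> Prop :=
  fun w n c => M w n = c.

(** * Represented spaces: partial surjections delta :⊆ Cantor -> X,
    given as single-valued surjective relations *)
Record RepSpace : Type := {
  carrier :> Type;
  rep : Cantor -> carrier -> Prop;
  rep_functional : forall p x y, rep p x -> rep p y -> x = y;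
  rep_surjective : forall x : carrier, exists p, rep p x
}.

Arguments rep {_}.

Definition continuous_map (X Y : RepSpace) (f : X -> Y) : Prop :=
  exists M, realizes (@rep X) (@rep Y) (cont_machine M) f.

Definition Hom (X Y : RepSpace) : Type := {f : X -> Y | continuous_map X Y f}.

(** * The function-space representation of C(X,Y):
    p names f iff p is the graph table of a word function M realizing f,
    i.e. p <<enc w, n>, c> = (M w n =? c). *)
Definition fun_rep {A B : Type} (rA : Cantor -> A -> Prop) (rB : Cantor -> B -> Prop)
  (p : Cantor) (f : A -> B) : Prop :=
  exists M : list bool -> nat -> nat,
    (forall w n c, p (npair (npair (enc w) n) c) = Nat.eqb (M w n) c) /\
    realizes rA rB (cont_machine M) f.

Definition hom_rep (X Y : RepSpace) : Cantor -> Hom X Y -> Prop :=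
  fun p f => fun_rep (@rep X) (@rep Y) p (proj1_sig f).

(** * Sierpinski space: bottom = false, top = true; delta(0^N) = bottom,
    delta(p) = top otherwise *)
Definition sier_rep (p : Cantor) (b : bool) : Prop :=
  b = true <-> exists n, p n = true.

Lemma sier_rep_functional : forall p x y, sier_rep p x -> sier_rep p y -> x = y.
Proof.
  unfold sier_rep; intros p x y Hx Hy.
  destruct x, y; try reflexivity.
  - exfalso. destruct Hx as [H1 _]. specialize (H1 eq_refl).
    destruct Hy as [_ H2]. discriminate (H2 H1).
  - exfalso. destruct Hy as [H1 _]. specialize (H1 eq_refl).
    destruct Hx as [_ H2]. discriminate (H2 H1).
Qed.

Lemma sier_rep_surjective : forall b, exists p, sier_rep p b.
Proof.
  intros b; exists (fun _ => b); unfold sier_rep; destruct b; split; intros H.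
  - exists 0; reflexivity.
  - reflexivity.
  - discriminate.
  - destruct H; assumption.
Qed.

Definition Sier : RepSpace :=
  {| carrier := bool; rep := sier_rep;
     rep_functional := sier_rep_functional;
     rep_surjective := sier_rep_surjective |}.

Definition Opens (Y : RepSpace) : Type := Hom Y Sier.

(** * Endofunctors on the category of represented spaces and continuous maps.
    (Morphisms are continuous maps; functor laws are stated on the
    underlying functions.) *)
Record Endofunctor : Type := {
  fobj :> RepSpace -> RepSpace;
  fmap : forall X Y : RepSpace, Hom X Y -> Hom (fobj X) (fobj Y);
  fmap_id : forall (X : RepSpace) (i : Hom X X),
      (forall x, proj1_sig i x = x) ->
      forall x, proj1_sig (fmap X X i) x = x;
  fmap_comp : forall (X Y Z : RepSpace) (f : Hom X Y) (g : Hom Y Z) (h : Hom X Z),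
      (forall x, proj1_sig h x = proj1_sig g (proj1_sig f x)) ->
      forall x, proj1_sig (fmap X Z h) x =
                proj1_sig (fmap Y Z g) (proj1_sig (fmap X Y f) x)
}.

Arguments fmap _ {X Y}.

Definition computable_endofunctor (d : Endofunctor) : Prop :=
  forall X Y : RepSpace,
    exists e : code,
      realizes (hom_rep X Y) (hom_rep (d X) (d Y)) (machine e) (@fmap d X Y).

Definition kappa (d : Endofunctor) (Y : RepSpace) (y : d Y) : Opens Y -> d Sier :=
  fun U => proj1_sig (fmap d U) y.

(** representation of C(O(Y), dS) on (plain) functions O(Y) -> dS *)
Definition kappa_target_rep (d : Endofunctor) (Y : RepSpace) :
  Cantor -> (Opens Y -> d Sier) -> Prop :=
  fun_rep (hom_rep Y Sier) (@rep (d Sier)).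

Definition d_admissible (d : Endofunctor) (Y : RepSpace) : Prop :=
  (forall y1 y2 : d Y, kappa d Y y1 = kappa d Y y2 -> y1 = y2) /\
  (exists e : code,
     forall (y : d Y) (p : Cantor),
       kappa_target_rep d Y p (kappa d Y y) ->
       exists q, computes (machine e) p q /\ rep q y).

(* Evaluating at the identity open [id : S -> S] gives [kappa d S y id = d(id) y = y], so
   kappa is injective and its inverse on the image is evaluation at [id].  Evaluation at a
   fixed computable argument is computable: a name of [kappa d S y] is the graph table of a
   realizer [M], and the table entries for [M] applied to prefixes of a computable name of
   [id] are found by unbounded search. *)

From Stdlib Require Import List Arith Lia Wf_nat.
Import ListNotations.

Local Notation P := CProj.

Lemma eval_proj i xs : eval (P i) xs (nth i xs 0).
Proof. constructor. Qed.

Lemma eval_succ a xs : eval CSucc (a :: xs) (S a).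
Proof. exact (ev_succ (a :: xs)). Qed.

Lemma eval_comp1 f g xs a v :
  eval g xs a -> eval f [a] v -> eval (CComp f [g]) xs v.
Proof. intros; econstructor; eauto. Qed.

Lemma eval_comp2 f g1 g2 xs a b v :
  eval g1 xs a -> eval g2 xs b -> eval f [a; b] v -> eval (CComp f [g1; g2]) xs v.
Proof. intros; econstructor; eauto. Qed.

Lemma eval_comp3 f g1 g2 g3 xs a b c v :
  eval g1 xs a -> eval g2 xs b -> eval g3 xs c -> eval f [a; b; c] v ->
  eval (CComp f [g1; g2; g3]) xs v.
Proof. intros; econstructor; eauto. Qed.

Lemma eval_prim f g xs (h : nat -> nat) :
  eval f xs (h 0) -> (forall n, eval g (n :: h n :: xs) (h (S n))) ->
  forall n, eval (CPrim f g) (n :: xs) (h n).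
Proof. intros H0 HS n; induction n; econstructor; eauto. Qed.

Lemma eval_functional : forall c xs v, eval c xs v -> forall v', eval c xs v' -> v = v'.
Proof.
  fix IH 4. intros c xs v H v' H'.
  destruct H as [| | |f gs xs ys v Hgs Hf|f g xs v Hf|f g n xs r v Hr Hg|f xs v Hv Hlt];
    inversion H'; subst; auto.
  - match goal with Hgs' : Forall2 _ gs ?ys' |- _ =>
      assert (ys = ys') as <- by
        (clear - IH Hgs Hgs'; revert ys' Hgs'; induction Hgs; intros ys' Hgs';
         inversion Hgs'; subst; f_equal; eauto) end.
    eauto.
  - eauto.
  - match goal with Hr' : eval _ (n :: xs) ?r' |- _ =>
      assert (r = r') as <- by exact (IH _ _ _ Hr _ Hr') end.
    eauto.
  - match goal with Hv' : eval f (v' :: xs) 0, Hlt' : forall k, k < v' -> _ |- _ =>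
      destruct (lt_eq_lt_dec v v') as [[Hvv|]|Hvv]; auto;
      [destruct (Hlt' v Hvv) as [m Hm] | destruct (Hlt v' Hvv) as [m Hm]];
      [pose proof (IH _ _ _ Hv _ Hm) | pose proof (IH _ _ _ Hm _ Hv')]; discriminate end.
Qed.

Fixpoint c_const k := match k with 0 => CZero | S k => CComp CSucc [c_const k] end.

Lemma eval_const k xs : eval (c_const k) xs k.
Proof. induction k; simpl; [constructor | eapply eval_comp1; eauto using eval_succ]. Qed.

Create HintDb eval_code.
#[local] Hint Resolve eval_proj eval_succ eval_const : eval_code.

Ltac eval_code :=
  repeat first [ solve [eauto with eval_code]
               | eapply eval_comp1 | eapply eval_comp2 | eapply eval_comp3 ].

Definition ifz (t y z : nat) := match t with 0 => y | S _ => z end.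
Definition dist (x y : nat) := (x - y) + (y - x).
Definition parity (n : nat) := Nat.b2n (Nat.odd n).

Fixpoint tri s := match s with 0 => 0 | S s => tri s + S s end.

Fixpoint diag i :=
  match i with 0 => 0 | S i => ifz (tri (S (diag i)) - S i) (S (diag i)) (diag i) end.

Definition unpair_snd i := i - tri (diag i).
Definition unpair_fst i := diag i - unpair_snd i.

Definition c_add := CPrim (P 0) (CComp CSucc [P 1]).
Definition c_pred := CPrim CZero (P 0).
Definition c_subr := CPrim (P 0) (CComp c_pred [P 1]).
Definition c_sub := CComp c_subr [P 1; P 0].
Definition c_ifz := CPrim (P 0) (P 3).
Definition c_dist := CComp c_add [c_sub; CComp c_sub [P 1; P 0]].
Definition c_parity := CPrim CZero (CComp c_ifz [P 1; c_const 1; c_const 0]).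
Definition c_div2 := CPrim CZero (CComp c_add [P 1; CComp c_parity [P 0]]).
Definition c_shiftr := CPrim (P 0) (CComp c_div2 [P 1]).
Definition c_pow2 := CPrim (c_const 1) (CComp c_add [P 1; P 1]).
Definition c_tri := CPrim CZero (CComp c_add [P 1; CComp CSucc [P 0]]).
Definition c_diag :=
  CPrim CZero (CComp c_ifz [CComp c_sub [CComp c_tri [CComp CSucc [P 1]]; CComp CSucc [P 0]];
                            CComp CSucc [P 1]; P 1]).
Definition c_unpair_snd := CComp c_sub [P 0; CComp c_tri [c_diag]].
Definition c_unpair_fst := CComp c_sub [c_diag; c_unpair_snd].
Definition c_npair := CComp c_add [CComp c_tri [c_add]; P 1].

Lemma eval_add a b xs : eval c_add (a :: b :: xs) (a + b).
Proof. apply (eval_prim _ _ _ (fun n => n + b)); intros; eval_code. Qed.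
#[local] Hint Resolve eval_add : eval_code.

Lemma eval_pred n xs : eval c_pred (n :: xs) (pred n).
Proof. apply (eval_prim _ _ _ pred); intros; [constructor | eval_code]. Qed.
#[local] Hint Resolve eval_pred : eval_code.

Lemma eval_sub x y xs : eval c_sub (x :: y :: xs) (x - y).
Proof.
  assert (Hr : forall y x xs, eval c_subr (y :: x :: xs) (x - y)).
  { intros y' x' xs'; apply (eval_prim _ _ _ (fun n => x' - n)).
    - rewrite Nat.sub_0_r; eval_code.
    - intros n; replace (x' - S n) with (pred (x' - n)) by lia; eval_code. }
  eapply eval_comp2; eauto with eval_code.
Qed.
#[local] Hint Resolve eval_sub : eval_code.

Lemma eval_ifz t y z xs : eval c_ifz (t :: y :: z :: xs) (ifz t y z).
Proof. apply (eval_prim _ _ _ (fun t => ifz t y z)); intros; eval_code. Qed.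
#[local] Hint Resolve eval_ifz : eval_code.

Lemma eval_dist x y xs : eval c_dist (x :: y :: xs) (dist x y).
Proof. eval_code. Qed.
#[local] Hint Resolve eval_dist : eval_code.

Lemma eval_parity n xs : eval c_parity (n :: xs) (parity n).
Proof.
  apply (eval_prim _ _ _ parity); [constructor|intros m].
  replace (parity (S m)) with (ifz (parity m) 1 0)
    by (unfold parity; rewrite Nat.odd_succ, <- Nat.negb_odd; now destruct (Nat.odd m)).
  eval_code.
Qed.
#[local] Hint Resolve eval_parity : eval_code.

Lemma eval_div2 n xs : eval c_div2 (n :: xs) (Nat.div2 n).
Proof.
  apply (eval_prim _ _ _ Nat.div2); [constructor|intros m].
  replace (Nat.div2 (S m)) with (Nat.div2 m + parity m).
  - eval_code.
  - unfold parity; pose proof (Nat.div2_odd m) as Hm; pose proof (Nat.div2_odd (S m)) as HSm.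
    rewrite Nat.odd_succ, <- Nat.negb_odd in HSm; destruct (Nat.odd m); simpl in *; lia.
Qed.
#[local] Hint Resolve eval_div2 : eval_code.

Lemma eval_shiftr k x xs : eval c_shiftr (k :: x :: xs) (Nat.shiftr x k).
Proof. apply (eval_prim _ _ _ (Nat.shiftr x)); intros; eval_code. Qed.
#[local] Hint Resolve eval_shiftr : eval_code.

Lemma eval_pow2 k xs : eval c_pow2 (k :: xs) (2 ^ k).
Proof.
  apply (eval_prim _ _ _ (Nat.pow 2)); [eval_code | intros m].
  replace (2 ^ S m) with (2 ^ m + 2 ^ m) by (simpl; lia); eval_code.
Qed.
#[local] Hint Resolve eval_pow2 : eval_code.

Lemma eval_tri s xs : eval c_tri (s :: xs) (tri s).
Proof. apply (eval_prim _ _ _ tri); intros; [constructor | eval_code]. Qed.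
#[local] Hint Resolve eval_tri : eval_code.

Lemma eval_diag i xs : eval c_diag (i :: xs) (diag i).
Proof. apply (eval_prim _ _ _ diag); intros; [constructor | eval_code]. Qed.
#[local] Hint Resolve eval_diag : eval_code.

Lemma eval_unpair_snd i xs : eval c_unpair_snd (i :: xs) (unpair_snd i).
Proof. eval_code. Qed.
#[local] Hint Resolve eval_unpair_snd : eval_code.

Lemma eval_unpair_fst i xs : eval c_unpair_fst (i :: xs) (unpair_fst i).
Proof. eval_code. Qed.
#[local] Hint Resolve eval_unpair_fst : eval_code.

Lemma tri_double s : 2 * tri s = s * (s + 1).
Proof. induction s; simpl tri; lia. Qed.

Lemma tri_mono s t : s <= t -> tri s <= tri t.
Proof. induction 1; simpl; lia. Qed.

Lemma npair_tri a b : npair a b = tri (a + b) + b.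
Proof.
  unfold npair; rewrite <- tri_double, (Nat.mul_comm 2), Nat.div_mul by lia; reflexivity.
Qed.

Lemma eval_npair a b xs : eval c_npair (a :: b :: xs) (npair a b).
Proof. rewrite npair_tri; eval_code. Qed.
#[local] Hint Resolve eval_npair : eval_code.

Lemma diag_spec i : tri (diag i) <= i < tri (S (diag i)).
Proof.
  induction i as [|i IH]; [simpl; lia|].
  change (diag (S i)) with (ifz (tri (S (diag i)) - S i) (S (diag i)) (diag i)).
  destruct (tri (S (diag i)) - S i) eqn:Ht; simpl ifz; simpl tri in *; lia.
Qed.

Lemma diag_npair a b : diag (npair a b) = a + b.
Proof.
  rewrite npair_tri; pose proof (diag_spec (tri (a + b) + b)) as [Hlo Hhi].
  destruct (lt_eq_lt_dec (diag (tri (a + b) + b)) (a + b)) as [[Hlt|]|Hlt]; auto;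
    apply tri_mono in Hlt; simpl tri in *; lia.
Qed.

Lemma unpair_snd_npair a b : unpair_snd (npair a b) = b.
Proof. unfold unpair_snd; rewrite diag_npair, npair_tri; lia. Qed.

Lemma unpair_fst_npair a b : unpair_fst (npair a b) = a.
Proof. unfold unpair_fst; rewrite unpair_snd_npair, diag_npair; lia. Qed.

Lemma enc_pos w : 1 <= enc w.
Proof. induction w; simpl; lia. Qed.

Lemma enc_lt_pow w : enc w < 2 ^ S (length w).
Proof. induction w as [|b w IH]; simpl in *; [lia | destruct b; lia]. Qed.

Lemma parity_enc_cons b w : parity (enc (b :: w)) = Nat.b2n b.
Proof.
  unfold parity; change (enc (b :: w)) with (2 * enc w + Nat.b2n b).
  destruct b; [apply (f_equal Nat.b2n), Nat.odd_odd | rewrite Nat.add_0_r, Nat.odd_even]; auto.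
Qed.

Lemma div2_enc_cons b w : Nat.div2 (enc (b :: w)) = enc w.
Proof.
  change (enc (b :: w)) with (2 * enc w + Nat.b2n b).
  destruct b; [apply Nat.div2_odd' | rewrite Nat.add_0_r; apply Nat.div2_double].
Qed.

Lemma shiftr_enc w k : k <= length w -> Nat.shiftr (enc w) k = enc (skipn k w).
Proof.
  revert k; induction w as [|b w IH]; intros [|k] Hk; simpl in Hk; try lia; try reflexivity.
  rewrite <- (Nat.shiftr_shiftr _ 1 k); change (Nat.shiftr _ 1) with (Nat.div2 (enc (b :: w))).
  rewrite div2_enc_cons; apply IH; lia.
Qed.

Lemma shiftr_enc_eq0 w k : Nat.shiftr (enc w) k = 0 <-> length w < k.
Proof.
  destruct (le_lt_dec k (length w)) as [Hk|Hk].
  - rewrite shiftr_enc by exact Hk; pose proof (enc_pos (skipn k w)); lia.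
  - split; [lia|intros _].
    rewrite Nat.shiftr_div_pow2; apply Nat.div_small.
    eapply Nat.lt_le_trans; [apply enc_lt_pow | apply Nat.pow_le_mono_r; lia].
Qed.

Lemma enc_ge2 w : 0 < length w -> 2 <= enc w.
Proof. destruct w as [|b w]; simpl; [lia|]; pose proof (enc_pos w); lia. Qed.

Lemma shiftr_enc_eq1 w k : Nat.shiftr (enc w) k = 1 <-> length w = k.
Proof.
  destruct (lt_eq_lt_dec k (length w)) as [[Hk| -> ]|Hk].
  - rewrite shiftr_enc by lia; pose proof (enc_ge2 (skipn k w)); rewrite length_skipn in *; lia.
  - rewrite shiftr_enc, skipn_all by lia; simpl; tauto.
  - pose proof (proj2 (shiftr_enc_eq0 w k) Hk); lia.
Qed.

Lemma skipn_nth_cons {A} (w : list A) k d :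
  k < length w -> skipn k w = nth k w d :: skipn (S k) w.
Proof.
  revert k; induction w as [|a w IH]; intros [|k] Hk; simpl in *; try lia; auto.
  apply IH; lia.
Qed.

Lemma parity_shiftr_enc w k :
  k < length w -> parity (Nat.shiftr (enc w) k) = Nat.b2n (nth k w false).
Proof.
  intros Hk; rewrite shiftr_enc, (skipn_nth_cons _ _ false) by lia; apply parity_enc_cons.
Qed.

(* Tests are [nat]-valued with [0] for "yes", since [CMu] searches for zeros:
   [bit_clear x k = 0] iff the word coded by [x] has a set bit at position [k]. *)
Definition bit_clear x k := ifz (Nat.shiftr x (S k)) 1 (1 - parity (Nat.shiftr x k)).

Lemma bit_clear_enc w k : bit_clear (enc w) k = 0 <-> k < length w /\ nth k w false = true.
Proof.
  unfold bit_clear; destruct (Nat.shiftr (enc w) (S k)) eqn:Hs.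
  - apply shiftr_enc_eq0 in Hs; simpl; lia.
  - assert (Hk : k < length w).
    { destruct (le_lt_dec (length w) k) as [Hl|]; auto.
      rewrite (proj2 (shiftr_enc_eq0 w (S k))) in Hs by lia; discriminate. }
    simpl ifz; rewrite parity_shiftr_enc by exact Hk.
    destruct (nth k w false); simpl; intuition (lia || discriminate).
Qed.

Definition c_bit_clear :=
  CComp c_ifz [CComp c_shiftr [CComp CSucc [P 1]; P 0]; c_const 1;
               CComp c_sub [c_const 1; CComp c_parity [CComp c_shiftr [P 1; P 0]]]].

Lemma eval_bit_clear x k xs : eval c_bit_clear (x :: k :: xs) (bit_clear x k).
Proof. eval_code. Qed.
#[local] Hint Resolve eval_bit_clear : eval_code.

Lemma length_prefix (p : Cantor) k : length (prefix p k) = k.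
Proof. unfold prefix; rewrite length_map, length_seq; reflexivity. Qed.

Lemma nth_prefix (p : Cantor) k i : i < k -> nth i (prefix p k) false = p i.
Proof.
  intros Hi; unfold prefix.
  rewrite nth_indep with (d' := p 0) by (rewrite length_map, length_seq; exact Hi).
  rewrite map_nth, seq_nth by exact Hi; reflexivity.
Qed.

Lemma bit_clear_prefix (p : Cantor) k i : bit_clear (enc (prefix p k)) i = 0 <-> i < k /\ p i = true.
Proof.
  rewrite bit_clear_enc, length_prefix.
  split; intros [Hi Hp]; rewrite nth_prefix in * by exact Hi; auto.
Qed.

Lemma enc_snoc w b : enc (w ++ [b]) = enc w + 2 ^ length w + Nat.b2n b * 2 ^ length w.
Proof. induction w as [|a w IH]; simpl length; simpl app; [destruct b|]; simpl in *; lia. Qed.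

Lemma enc_prefix_S (p : Cantor) k :
  enc (prefix p (S k)) = enc (prefix p k) + 2 ^ k + Nat.b2n (p k) * 2 ^ k.
Proof.
  unfold prefix; rewrite seq_S, map_app; simpl map; rewrite enc_snoc.
  fold (prefix p k); rewrite length_prefix; reflexivity.
Qed.

Lemma bcode_inj a b : bcode a = bcode b -> a = b.
Proof. destruct a, b; simpl; congruence. Qed.

Section ApplyTable.

Variables (r : Cantor) (c_prefix : code).
Hypothesis eval_c_prefix : forall k xs, eval c_prefix (k :: xs) (enc (prefix r k)).
#[local] Hint Resolve eval_c_prefix : eval_code.

Definition query k n c := npair (npair (enc (prefix r k)) n) c.

Definition search_cond k x n := ifz (bit_clear x (query k n 1)) 0 (bit_clear x (query k n 2)).
Definition search_out k x n := ifz (bit_clear x (query k n 1)) 1 2.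

Definition c_query := CComp c_npair [CComp c_npair [CComp c_prefix [P 0]; P 1]; P 2].
Definition c_found c := CComp c_bit_clear [P 1; CComp c_query [P 0; P 2; c_const c]].
Definition c_search_cond := CComp c_ifz [c_found 1; c_const 0; c_found 2].
Definition c_search_out := CComp c_ifz [c_found 1; c_const 1; c_const 2].

(* On input [enc w; n]: find the least [k] such that the word [w] has a set bit at
   [query k n (bcode b)] for some [b], and output [bcode b]. *)
Definition c_apply_table := CComp c_search_out [CMu c_search_cond; P 0; P 1].

Lemma eval_search_cond k x n xs : eval c_search_cond (k :: x :: n :: xs) (search_cond k x n).
Proof. eval_code. Qed.

Lemma eval_search_out k x n xs : eval c_search_out (k :: x :: n :: xs) (search_out k x n).
Proof. eval_code. Qed.

Lemma search_cond_bcode k x n b : bit_clear x (query k n (bcode b)) = 0 -> search_cond k x n = 0.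
Proof.
  unfold search_cond; destruct (bit_clear x (query k n 1)) eqn:H1; auto.
  destruct b; simpl in *; congruence.
Qed.

Lemma search_out_bcode k x n :
  search_cond k x n = 0 ->
  exists b, search_out k x n = bcode b /\ bit_clear x (query k n (bcode b)) = 0.
Proof.
  unfold search_cond, search_out; destruct (bit_clear x (query k n 1)) eqn:H1; simpl.
  - now exists false.
  - now exists true.
Qed.

Lemma apply_table_sound x n v :
  eval c_apply_table [x; n] v -> exists k, search_cond k x n = 0 /\ v = search_out k x n.
Proof.
  intros H; inversion H as [| | |f gs xs ys v' Hargs Hout| | |]; subst.
  inversion Hargs as [|g k gs' ys' Hmu Hargs']; subst.
  inversion Hargs' as [|g' x' gs'' ys'' Hx Hargs'']; subst.
  inversion Hargs'' as [|g'' n' gs3 ys3 Hn Hnil]; subst.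
  inversion Hnil; subst; inversion Hx; inversion Hn; subst.
  inversion Hmu as [| | | | | |f' xs' k' Hk Hlt]; subst.
  exists k; split.
  - exact (eval_functional _ _ _ (eval_search_cond k x n []) _ Hk).
  - exact (eval_functional _ _ _ Hout _ (eval_search_out k x n [])).
Qed.

Lemma apply_table_complete x n k0 :
  search_cond k0 x n = 0 ->
  exists k, search_cond k x n = 0 /\ eval c_apply_table [x; n] (search_out k x n).
Proof.
  intros Hk0.
  destruct (dec_inh_nat_subset_has_unique_least_element (fun k => search_cond k x n = 0))
    as [k [[Hk Hleast] _]]; [intros; lia | eauto|].
  exists k; split; [exact Hk|].
  eapply eval_comp3; [|apply eval_proj|apply eval_proj|apply eval_search_out].
  constructor; [rewrite <- Hk; apply eval_search_cond|].
  intros j Hj; exists (pred (search_cond j x n)).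
  assert (search_cond j x n <> 0) by (intros Hj0; apply Hleast in Hj0; lia).
  replace (S (pred (search_cond j x n))) with (search_cond j x n) by lia.
  apply eval_search_cond.
Qed.

Lemma apply_table_computes (M : list bool -> nat -> nat) (p q : Cantor) :
  (forall w n c, p (npair (npair (enc w) n) c) = (M w n =? c)) ->
  computes (cont_machine M) r q ->
  computes (machine c_apply_table) p q.
Proof.
  intros Htable Hq.
  assert (Hfound : forall j k n b, bit_clear (enc (prefix p j)) (query k n (bcode b)) = 0 ->
                                   b = q n).
  { intros j k n b Hb; apply bit_clear_prefix in Hb as [_ Hb].
    unfold query in Hb; rewrite Htable in Hb; apply Nat.eqb_eq in Hb.
    exact (proj2 (Hq n) k b Hb). }
  assert (Hout : forall j n v, machine c_apply_table (prefix p j) n v -> v = bcode (q n)).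
  { intros j n v Hv; apply apply_table_sound in Hv as [k [Hk ->]].
    destruct (search_out_bcode _ _ _ Hk) as [b [-> Hb]].
    now rewrite (Hfound _ _ _ _ Hb). }
  intros n; split.
  - destruct (proj1 (Hq n)) as [k0 Hk0].
    set (j := S (query k0 n (bcode (q n)))).
    assert (Hset : bit_clear (enc (prefix p j)) (query k0 n (bcode (q n))) = 0).
    { apply bit_clear_prefix; split; [unfold j; lia|].
      unfold query; rewrite Htable; apply Nat.eqb_eq, Hk0. }
    destruct (apply_table_complete _ _ _ (search_cond_bcode _ _ _ _ Hset)) as [k [_ Hev]].
    exists j; rewrite <- (Hout _ _ _ Hev); exact Hev.
  - intros j b Hb; apply bcode_inj, Hout with (j := j), Hb.
Qed.

End ApplyTable.

Definition sier_copy (w : list bool) (n : nat) : nat :=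
  if length w =? S n then bcode (nth n w false) else 0.

Lemma sier_copy_realizes_id :
  realizes (@rep Sier) (@rep Sier) (cont_machine sier_copy) (fun b : Sier => b).
Proof.
  intros p x Hx; exists p; split; [|exact Hx].
  intros n; unfold cont_machine, sier_copy; split.
  - exists (S n); rewrite length_prefix, Nat.eqb_refl, nth_prefix by lia; reflexivity.
  - intros k b; rewrite length_prefix; destruct (Nat.eqb_spec k (S n)) as [->|]; [|destruct b; discriminate].
    rewrite nth_prefix by lia; intros Hb; symmetry; apply bcode_inj, Hb.
Qed.

Definition id_Sier : Hom Sier Sier :=
  exist _ (fun b : Sier => b) (ex_intro _ sier_copy sier_copy_realizes_id).

Lemma dist_eq0 x y : dist x y = 0 <-> x = y.
Proof. unfold dist; lia. Qed.

Definition sier_copy_num a n := ifz (dist (Nat.shiftr a (S n)) 1) (S (parity (Nat.shiftr a n))) 0.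

Lemma sier_copy_num_enc w n : sier_copy_num (enc w) n = sier_copy w n.
Proof.
  unfold sier_copy_num, sier_copy.
  destruct (Nat.eqb_spec (length w) (S n)) as [Hw|Hw].
  - rewrite (proj2 (shiftr_enc_eq1 w (S n)) Hw), parity_shiftr_enc by lia.
    now destruct (nth n w false).
  - destruct (dist _ 1) eqn:Hd; [|reflexivity].
    apply dist_eq0, shiftr_enc_eq1 in Hd; contradiction.
Qed.

Definition id_table_val i :=
  dist (sier_copy_num (unpair_fst (unpair_fst i)) (unpair_snd (unpair_fst i))) (unpair_snd i).

Definition id_name : Cantor := fun i => id_table_val i =? 0.

Lemma id_name_table w n c : id_name (npair (npair (enc w) n) c) = (sier_copy w n =? c).
Proof.
  unfold id_name, id_table_val.
  rewrite !unpair_fst_npair, !unpair_snd_npair, sier_copy_num_enc.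
  destruct (Nat.eqb_spec (sier_copy w n) c) as [Hc|Hc];
    [apply Nat.eqb_eq, dist_eq0, Hc | apply Nat.eqb_neq; rewrite dist_eq0; exact Hc].
Qed.

Lemma id_name_names_id_Sier : hom_rep Sier Sier id_name id_Sier.
Proof. exists sier_copy; split; [exact id_name_table | exact sier_copy_realizes_id]. Qed.

Definition c_sier_copy_num :=
  CComp c_ifz [CComp c_dist [CComp c_shiftr [CComp CSucc [P 1]; P 0]; c_const 1];
               CComp CSucc [CComp c_parity [CComp c_shiftr [P 1; P 0]]]; c_const 0].
Definition c_id_table_val :=
  CComp c_dist [CComp c_sier_copy_num [CComp c_unpair_fst [c_unpair_fst];
                                        CComp c_unpair_snd [c_unpair_fst]]; c_unpair_snd].
Definition c_id_prefix :=
  CPrim (c_const 1) (CComp c_add [CComp c_add [P 1; CComp c_pow2 [P 0]];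
                                  CComp c_ifz [CComp c_id_table_val [P 0]; CComp c_pow2 [P 0];
                                               c_const 0]]).

Lemma eval_sier_copy_num a n xs : eval c_sier_copy_num (a :: n :: xs) (sier_copy_num a n).
Proof. eval_code. Qed.
#[local] Hint Resolve eval_sier_copy_num : eval_code.

Lemma eval_id_table_val i xs : eval c_id_table_val (i :: xs) (id_table_val i).
Proof. eval_code. Qed.
#[local] Hint Resolve eval_id_table_val : eval_code.

Lemma eval_id_prefix k xs : eval c_id_prefix (k :: xs) (enc (prefix id_name k)).
Proof.
  apply (eval_prim _ _ _ (fun k => enc (prefix id_name k))); [apply eval_const | intros m].
  rewrite enc_prefix_S.
  replace (Nat.b2n (id_name m) * 2 ^ m) with (ifz (id_table_val m) (2 ^ m) 0)
    by (unfold id_name; destruct (id_table_val m); simpl; lia).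
  eval_code.
Qed.

Lemma kappa_id_Sier (d : Endofunctor) (y : d Sier) : kappa d Sier y id_Sier = y.
Proof. apply fmap_id; reflexivity. Qed.

Theorem proposition6 :
  forall d : Endofunctor, computable_endofunctor d -> d_admissible d Sier.
Proof.
  intros d _; split.
  - intros y1 y2 H; rewrite <- (kappa_id_Sier d y1), <- (kappa_id_Sier d y2), H; reflexivity.
  - exists (c_apply_table c_id_prefix); intros y p [M [Htable Hreal]].
    destruct (Hreal id_name id_Sier id_name_names_id_Sier) as [q [Hq Hy]].
    exists q; split.
    + exact (apply_table_computes _ _ eval_id_prefix M p q Htable Hq).
    + rewrite kappa_id_Sier in Hy; exact Hy.
Qed.
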